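(* Let $(\mathbf{X},\mathbf{A})\sim \textsf{CSBM}(n,p,q,\boldsymbol{\mu},\sigma^2)$ and for an edge $(i,j)$ let $\mathbf{X}'_{ij}=\begin{pmatrix}\mathbf{X}_i\\ \mathbf{X}_j\end{pmatrix}\in\mathbb{R}^{2d}$. Consider the problem of predicting the label $y\in\{0,1\}$ of an edge $(i,j)$ ($y=1$ if intra-class, $y=0$ if inter-class) from $\mathbf{X}'_{ij}$. The Bayes optimal classifier for $\mathbf{X}'_{ij}$ is realized by $$h^*(\boldsymbol{x})=\begin{cases}0,& \text{if } p\cosh\!\left(\frac{\boldsymbol{x}^T\boldsymbol{\mu}'}{\sigma^2}\right)\le q\cosh\!\left(\frac{\boldsymbol{x}^T\boldsymbol{\nu}'}{\sigma^2}\right),\\ 1,&\text{otherwise},\end{cases}$$ where $\boldsymbol{\mu}'=\begin{pmatrix}\boldsymbol{\mu}\\ \boldsymbol{\mu}\end{pmatrix}$ and $\boldsymbol{\nu}'=\begin{pmatrix}\boldsymbol{\mu}\\ -\boldsymbol{\mu}\end{pmatrix}$.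
   Context: CSBM: fix $n,d\in\mathbb{N}$, $\boldsymbol{\mu}\in\mathbb{R}^d$, $\sigma>0$, $p,q\in[0,1]$ with $p+q>0$. Draw $\epsilon_1,\dots,\epsilon_n$ i.i.d. Bernoulli$(1/2)$, classes $C_k=\{j:\epsilon_j=k\}$. Independently $\mathbf{X}_i\sim N((2\epsilon_i-1)\boldsymbol{\mu},\sigma^2\mathbf{I})$. Adjacency entries $a_{ij}\sim\mathrm{Ber}(p)$ if $i,j$ are in the same class and $\mathrm{Ber}(q)$ otherwise. For an edge $(i,j)$ of the graph (i.e. a pair conditioned on $a_{ij}=1$), the label is $y=1$ if $i,j$ are in the same class and $y=0$ otherwise, so $\Pr[y=1]=p/(p+q)$, $\Pr[y=0]=q/(p+q)$; given $y=1$, $\mathbf{X}'_{ij}\sim N(\pm\boldsymbol{\mu}',\sigma^2\mathbf{I})$ with each sign equally likely, and given $y=0$, $\mathbf{X}'_{ij}\sim N(\pm\boldsymbol{\nu}',\sigma^2\mathbf{I})$ with each sign equally likely. The Bayes optimal classifier is $\boldsymbol{x}\mapsto\arg\max_{c\in\{0,1\}}\Pr[y=c\mid \mathbf{X}'_{ij}=\boldsymbol{x}]$. *)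

From HB Require Import structures.
From mathcomp Require Import all_boot all_order all_algebra.
From mathcomp Require Import all_classical all_reals all_analysis.
Set Implicit Arguments. Unset Strict Implicit. Unset Printing Implicit Defensive.
Import Order.TTheory GRing.Theory Num.Theory.
Local Open Scope ring_scope.

Section CSBMEdge.
Variable R : realType.

Definition coshR (x : R) : R := (expR x + expR (- x)) / 2.

Definition dotv (k : nat) (x y : 'cV[R]_k) : R := \sum_(i < k) x i ord0 * y i ord0.

Definition gauss_pdf (k : nat) (sigma : R) (m x : 'cV[R]_k) : R :=
  ((2 * pi * sigma ^+ 2) `^ (k%:R / 2))^-1 *
  expR (- dotv (x - m) (x - m) / (2 * sigma ^+ 2)).

Definition mu' (d : nat) (mu : 'cV[R]_d) : 'cV[R]_(d + d) := col_mx mu mu.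
Definition nu' (d : nat) (mu : 'cV[R]_d) : 'cV[R]_(d + d) := col_mx mu (- mu).

(* Joint density of (y, X'_ij) for an edge (i,j) of the CSBM:
   Pr[y=1] = p/(p+q), X' | y=1 ~ 1/2 N(mu',s^2 I) + 1/2 N(-mu',s^2 I);
   Pr[y=0] = q/(p+q), X' | y=0 ~ 1/2 N(nu',s^2 I) + 1/2 N(-nu',s^2 I).
   Label y = 1 is encoded as true, y = 0 as false. *)
Definition edge_joint (d : nat) (p q sigma : R) (mu : 'cV[R]_d)
  (c : bool) (x : 'cV[R]_(d + d)) : R :=
  if c then p / (p + q) * (2^-1 * gauss_pdf sigma (mu' mu) x +
                           2^-1 * gauss_pdf sigma (- mu' mu) x)
  else q / (p + q) * (2^-1 * gauss_pdf sigma (nu' mu) x +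
                      2^-1 * gauss_pdf sigma (- nu' mu) x).

Definition edge_posterior (d : nat) (p q sigma : R) (mu : 'cV[R]_d)
  (c : bool) (x : 'cV[R]_(d + d)) : R :=
  edge_joint p q sigma mu c x /
  (edge_joint p q sigma mu false x + edge_joint p q sigma mu true x).

Definition bayes_optimal (d : nat) (p q sigma : R) (mu : 'cV[R]_d)
  (h : 'cV[R]_(d + d) -> bool) : Prop :=
  forall x c, edge_posterior p q sigma mu c x <= edge_posterior p q sigma mu (h x) x.

Definition h_star (d : nat) (p q sigma : R) (mu : 'cV[R]_d)
  (x : 'cV[R]_(d + d)) : bool :=
  if p * coshR (dotv x (mu' mu) / sigma ^+ 2) <= q * coshR (dotv x (nu' mu) / sigma ^+ 2)
  then false else true.

End CSBMEdge.

From HB Require Import structures.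
From mathcomp Require Import all_boot all_order all_algebra.
From mathcomp Require Import all_classical all_reals all_analysis.
From mathcomp Require Import ring.
Set Implicit Arguments. Unset Strict Implicit. Unset Printing Implicit Defensive.
Import Order.TTheory GRing.Theory Num.Theory.
Local Open Scope ring_scope.

(* Expanding the square in the Gaussian exponent splits each density into a
   factor depending on the mean only through its norm and the factor
   exp(x.m / sigma^2); averaging over the means m and -m turns the latter into
   cosh(x.m / sigma^2).  Since mu' and nu' have the same norm, both joint
   densities of (y, X') are one common nonnegative factor times
   p cosh(x.mu' / sigma^2), resp. q cosh(x.nu' / sigma^2), and the posterior
   is maximised by the label with the larger of these two scores. *)

Section Gaussian.
Variable R : realType.
Implicit Types (k : nat) (sigma : R).

Lemma dotvBB k (x m : 'cV[R]_k) :
  dotv (x - m) (x - m) = dotv x x + dotv m m - 2 * dotv x m.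
Proof.
rewrite /dotv mulr_sumr -big_split -sumrB /=; apply: eq_bigr => i _.
by rewrite !mxE; ring.
Qed.

Lemma dotvN k (x m : 'cV[R]_k) : dotv x (- m) = - dotv x m.
Proof. by rewrite /dotv -sumrN; apply: eq_bigr => i _; rewrite !mxE mulrN. Qed.

Lemma dotvNN k (m : 'cV[R]_k) : dotv (- m) (- m) = dotv m m.
Proof. by rewrite /dotv; apply: eq_bigr => i _; rewrite !mxE mulrNN. Qed.

Lemma dotv_col_mx k (a b a' b' : 'cV[R]_k) :
  dotv (col_mx a b) (col_mx a' b') = dotv a a' + dotv b b'.
Proof.
by rewrite /dotv big_split_ord /=; congr (_ + _); apply: eq_bigr => i _;
  rewrite ?col_mxEu ?col_mxEd.
Qed.

Definition gauss_envelope k sigma (m x : 'cV[R]_k) : R :=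
  ((2 * pi * sigma ^+ 2) `^ (k%:R / 2))^-1 *
  expR (- (dotv x x + dotv m m) / (2 * sigma ^+ 2)).

Lemma gauss_envelope_ge0 k sigma (m x : 'cV[R]_k) : 0 <= gauss_envelope sigma m x.
Proof. by rewrite mulr_ge0 ?invr_ge0 ?powR_ge0 // ltW ?expR_gt0. Qed.

Lemma gauss_envelopeN k sigma (m x : 'cV[R]_k) :
  gauss_envelope sigma (- m) x = gauss_envelope sigma m x.
Proof. by rewrite /gauss_envelope dotvNN. Qed.

(* No hypothesis on sigma: for sigma = 0 all exponents are 0 by x / 0 = 0. *)
Lemma gauss_pdfE k sigma (m x : 'cV[R]_k) :
  gauss_pdf sigma m x = gauss_envelope sigma m x * expR (dotv x m / sigma ^+ 2).
Proof.
rewrite /gauss_pdf /gauss_envelope -[RHS]mulrA -expRD dotvBB; congr (_ * expR _).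
set c := dotv x m.
rewrite invfM opprB mulrBl mulNr addrC; congr (_ + _).
by rewrite [2 * c]mulrC -mulrA (mulrA 2) divff ?mul1r.
Qed.

Lemma gauss_pdf_mixtureN k sigma (m x : 'cV[R]_k) :
  2^-1 * gauss_pdf sigma m x + 2^-1 * gauss_pdf sigma (- m) x =
  gauss_envelope sigma m x * coshR (dotv x m / sigma ^+ 2).
Proof.
rewrite !gauss_pdfE gauss_envelopeN dotvN mulNr /coshR.

by ring.
Qed.

Lemma coshR_gt0 (y : R) : 0 < coshR y.
Proof. by rewrite /coshR divr_gt0 // addr_gt0 ?expR_gt0. Qed.

End Gaussian.

Section Edge.
Variables (R : realType) (d : nat) (p q sigma : R) (mu : 'cV[R]_d).
Hypotheses (hp0 : 0 <= p) (hq0 : 0 <= q).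

Definition edge_score (c : bool) (x : 'cV[R]_(d + d)) : R :=
  if c then p * coshR (dotv x (mu' mu) / sigma ^+ 2)
  else q * coshR (dotv x (nu' mu) / sigma ^+ 2).

Lemma edge_score_ge0 c x : 0 <= edge_score c x.
Proof. by case: c; rewrite mulr_ge0 // ltW ?coshR_gt0. Qed.

Lemma edge_score_le_h_star c x : edge_score c x <= edge_score (h_star p q sigma mu x) x.
Proof.
rewrite /h_star; case: ifP => hle; case: c => //=; rewrite ?lexx //.
by rewrite ltW // ltNge hle.
Qed.

Lemma gauss_envelope_nu' x :
  gauss_envelope sigma (nu' mu) x = gauss_envelope sigma (mu' mu) x.
Proof. by rewrite /gauss_envelope /nu' /mu' !dotv_col_mx dotvNN. Qed.

Lemma edge_jointE c x :
  edge_joint p q sigma mu c x =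
  gauss_envelope sigma (mu' mu) x / (p + q) * edge_score c x.
Proof.
by rewrite /edge_joint /edge_score; case: c;
  rewrite gauss_pdf_mixtureN ?gauss_envelope_nu'; ring.
Qed.

Lemma edge_joint_ge0 c x : 0 <= edge_joint p q sigma mu c x.
Proof.
by rewrite edge_jointE mulr_ge0 ?edge_score_ge0 ?divr_ge0 ?gauss_envelope_ge0 ?addr_ge0.
Qed.

Lemma edge_posterior_le c c' x :
  edge_joint p q sigma mu c x <= edge_joint p q sigma mu c' x ->
  edge_posterior p q sigma mu c x <= edge_posterior p q sigma mu c' x.
Proof. by apply: ler_wpM2r; rewrite invr_ge0 addr_ge0 ?edge_joint_ge0. Qed.

End Edge.

Theorem lemma8 (R : realType) (d : nat) (mu : 'cV[R]_d) (sigma p q : R)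
  (hsigma : 0 < sigma) (hp0 : 0 <= p) (hp1 : p <= 1) (hq0 : 0 <= q) (hq1 : q <= 1)
  (hpq : 0 < p + q) :
  bayes_optimal p q sigma mu (h_star p q sigma mu).
Proof.
move=> x c; apply: edge_posterior_le => //; rewrite !edge_jointE.
apply: ler_wpM2l; last exact: edge_score_le_h_star.
by rewrite divr_ge0 ?gauss_envelope_ge0 ?addr_ge0.
Qed.
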